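(* Let $(r_n),(R_n)$ be real sequences with $(r_n)$ bounded, and $(C_n),(D_n),(d_n)$ complex sequences with $\sum_n(|C_n|^2+|d_nD_n|^2)<\infty$. Assume there are $n'\in\mathbb{N}$, $\mu>0$, $\nu>1/2$ such that $|R_n|\le\mu n^{-\nu}(|C_n|^2+|d_nD_n|^2)^{1/2}$ for all $n\ge n'$. Then for every $n_0\ge n'$ and every $T>0$ there is $c(T)>0$ (depending on $T,\mu,\nu,\sup_n|r_n|$) such that $$\int_{-\infty}^{\infty}k^*(t)\Big|\sum_{n=n_0}^\infty R_ne^{r_nt}\Big|^2dt\le c(T)\sum_{n=n_0}^\infty\big(|C_n|^2+|d_nD_n|^2\big).$$
   Context: For $T>0$, $k^*(t):=\cos\big(\frac{\pi t}{2T}\big)$ for $|t|\le T$ and $k^*(t):=0$ for $|t|>T$. *)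

From Stdlib Require Import Reals Lra.
Open Scope R_scope.

(* Complex numbers represented as pairs (real part, imaginary part). *)
Definition Cplx : Type := (R * R)%type.
Definition Cmul (z w : Cplx) : Cplx :=
  (fst z * fst w - snd z * snd w, fst z * snd w + snd z * fst w).
Definition Cmod (z : Cplx) : R := sqrt (fst z ^ 2 + snd z ^ 2).

Definition kstar (T t : R) : R :=
  if Rle_dec (Rabs t) T then cos (PI * t / (2 * T)) else 0.

(* For |t| <= T every term of the series is at most |R_n| e^(M T), and by
   Cauchy-Schwarz  sum |R_n| <= mu (sum n^(-2 nu))^(1/2) (sum |C_n|^2 + |d_n D_n|^2)^(1/2),
   where sum_(n >= n0) n^(-2 nu) <= 2 nu / (2 nu - 1) by comparison with an integral
   because 2 nu > 1.  So the series converges normally, its sum S is continuous and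
   |S|^2 <= e^(2 M T) mu^2 (2 nu / (2 nu - 1)) l on [-T, T]; as 0 <= k^* <= 1, the
   integral is at most 2 T times this bound. *)

From Stdlib Require Import Reals Lra Lia.
Open Scope R_scope.

Lemma exp_le x y : x <= y -> exp x <= exp y.
Proof. intros [H|H]; [left; apply exp_increasing, H | right; rewrite H; reflexivity]. Qed.

Lemma ln_le_sub_1 y : 0 < y -> ln y <= y - 1.
Proof. intros Hy. pose proof (exp_ineq1_le (ln y)). rewrite exp_ln in H by exact Hy. lra. Qed.

Lemma ln_pred_le x : 1 < x -> ln (x - 1) <= ln x - / x.
Proof.
  intros Hx.
  pose proof (ln_le_sub_1 ((x - 1) / x) ltac:(apply Rdiv_lt_0_compat; lra)) as H.
  unfold Rdiv in H. rewrite ln_mult, ln_Rinv in H by (try apply Rinv_0_lt_compat; lra).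
  replace ((x - 1) * / x - 1) with (- / x) in H by (field; lra). lra.
Qed.

(* Discrete form of [x^-s <= int_(x-1)^x t^-s dt]: as [ln (x-1) <= ln x - 1/x],
   [(x-1)^(1-s) >= x^(1-s) e^((s-1)/x) >= x^(1-s) + (s-1) x^-s]. *)
Lemma Rpower_opp_le_telescope s x : 1 < s -> 1 < x ->
  Rpower x (- s) <= (Rpower (x - 1) (1 - s) - Rpower x (1 - s)) / (s - 1).
Proof.
  intros Hs Hx.
  set (P := Rpower x (- s)).
  assert (HP : 0 < P) by apply exp_pos.
  assert (Ex : Rpower x (1 - s) = x * P).
  { unfold P. rewrite <- (Rpower_1 x) at 2 by lra. rewrite <- Rpower_plus. f_equal; ring. }
  assert (Hshift : x * P * exp ((s - 1) / x) <= Rpower (x - 1) (1 - s)).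
  { rewrite <- Ex. unfold Rpower. rewrite <- exp_plus.
    apply exp_le. pose proof (ln_pred_le x Hx).
    replace ((s - 1) / x) with ((s - 1) * / x) by (unfold Rdiv; ring). nra. }
  pose proof (exp_ineq1_le ((s - 1) / x)) as Hexp.
  assert (x * P * (1 + (s - 1) / x) <= x * P * exp ((s - 1) / x))
    by (apply Rmult_le_compat_l; nra).
  rewrite Ex. apply Rmult_le_reg_l with (s - 1); [lra|].
  replace ((s - 1) * ((Rpower (x - 1) (1 - s) - x * P) / (s - 1)))
    with (Rpower (x - 1) (1 - s) - x * P) by (field; lra).
  replace (x * P * (1 + (s - 1) / x)) with (x * P + (s - 1) * P) in H by (field; lra).
  lra.
Qed.

Lemma sum_Rpower_opp_le s n0 N : 1 < s -> (1 <= n0)%nat ->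
  sum_f_R0 (fun k => Rpower (INR (n0 + k)) (- s)) N <= s / (s - 1).
Proof.
  intros Hs Hn0.
  assert (Hpos : forall y e, 1 <= y -> e <= 0 -> 0 <= Rpower y e <= 1).
  { intros y e Hy He. split; [left; apply exp_pos|].
    rewrite <- (Rpower_O y) by lra. apply Rle_Rpower; lra. }
  assert (Htel : sum_f_R0 (fun k => Rpower (INR (n0 + k)) (- s)) N
                 <= s / (s - 1) - Rpower (INR (n0 + N)) (1 - s) / (s - 1)).
  { induction N as [|N IH]; simpl sum_f_R0.
    - rewrite Nat.add_0_r.
      assert (Hy : 1 <= INR n0) by (apply (le_INR 1); exact Hn0).
      pose proof (Hpos _ (- s) Hy ltac:(lra)).
      pose proof (Hpos _ (1 - s) Hy ltac:(lra)).
      replace (s / (s - 1)) with (1 + 1 / (s - 1)) by (field; lra).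
      assert (Rpower (INR n0) (1 - s) / (s - 1) <= 1 / (s - 1))
        by (apply Rmult_le_compat_r; [left; apply Rinv_0_lt_compat|]; lra).
      lra.
    - assert (Hx : INR (n0 + S N) - 1 = INR (n0 + N))
        by (rewrite Nat.add_succ_r, S_INR; ring).
      assert (1 <= INR (n0 + N)) by (apply (le_INR 1); lia).
      pose proof (Rpower_opp_le_telescope s (INR (n0 + S N)) Hs ltac:(lra)) as Hstep.
      rewrite Hx in Hstep. unfold Rdiv in *. lra. }
  pose proof (Hpos (INR (n0 + N)) (1 - s) ltac:(apply (le_INR 1); lia) ltac:(lra)).
  assert (0 <= Rpower (INR (n0 + N)) (1 - s) / (s - 1))
    by (apply Rmult_le_pos; [|left; apply Rinv_0_lt_compat]; lra).
  lra.
Qed.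

Lemma sum_f_R0_mult_sqr_le (u v : nat -> R) N :
  sum_f_R0 (fun k => u k * v k) N ^ 2
    <= sum_f_R0 (fun k => u k ^ 2) N * sum_f_R0 (fun k => v k ^ 2) N.
Proof.
  induction N as [|N IH]; [simpl; nra|]. rewrite !tech5.
  set (X := sum_f_R0 (fun k => u k * v k) N).
  set (A := sum_f_R0 (fun k => u k ^ 2) N).
  set (B := sum_f_R0 (fun k => v k ^ 2) N).
  fold X A B in IH.
  assert (HA : 0 <= A) by (apply cond_pos_sum; intro; apply pow2_ge_0).
  assert (HB : 0 <= B) by (apply cond_pos_sum; intro; apply pow2_ge_0).
  set (p := u (S N)). set (q := v (S N)).
  (* The cross term is controlled by AM-GM: [(2 X p q)^2 <= 4 A B p^2 q^2 <= (A q^2 + B p^2)^2]. *)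
  assert (Hcross : Rabs (2 * X * p * q) <= Rabs (A * q ^ 2 + B * p ^ 2)).
  { apply Rsqr_le_abs_0. unfold Rsqr.
    pose proof (pow2_ge_0 (A * q ^ 2 - B * p ^ 2)).
    assert (X ^ 2 * (p ^ 2 * q ^ 2) <= A * B * (p ^ 2 * q ^ 2))
      by (apply Rmult_le_compat_r; [apply Rmult_le_pos; apply pow2_ge_0 | exact IH]).
    nra. }
  rewrite (Rabs_pos_eq (A * q ^ 2 + B * p ^ 2)) in Hcross
    by (pose proof (pow2_ge_0 p); pose proof (pow2_ge_0 q); nra).
  pose proof (Rle_abs (2 * X * p * q)). nra.
Qed.

Lemma sum_f_R0_mult_le_sqrt (u v : nat -> R) N :
  sum_f_R0 (fun k => u k * v k) N
    <= sqrt (sum_f_R0 (fun k => u k ^ 2) N) * sqrt (sum_f_R0 (fun k => v k ^ 2) N).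
Proof.
  rewrite <- sqrt_mult by (apply cond_pos_sum; intro; apply pow2_ge_0).
  eapply Rle_trans; [apply Rle_abs|].
  rewrite <- sqrt_Rsqr_abs. apply sqrt_le_1_alt.
  rewrite Rsqr_pow2. apply sum_f_R0_mult_sqr_le.
Qed.

Lemma sum_abs_le_weighted (b w a : nat -> R) mu W A N :
  0 <= mu -> (forall k, 0 <= a k) -> (forall k, Rabs (b k) <= mu * w k * sqrt (a k)) ->
  sum_f_R0 (fun k => w k ^ 2) N <= W -> sum_f_R0 a N <= A ->
  sum_f_R0 (fun k => Rabs (b k)) N <= mu * sqrt W * sqrt A.
Proof.
  intros Hmu Ha Hb HW HA.
  apply Rle_trans with (mu * sum_f_R0 (fun k => w k * sqrt (a k)) N).
  - rewrite scal_sum. apply sum_Rle. intros k _. rewrite Rmult_comm, <- Rmult_assoc. apply Hb.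
  - rewrite Rmult_assoc. apply Rmult_le_compat_l; [exact Hmu|].
    eapply Rle_trans; [apply sum_f_R0_mult_le_sqrt|].
    rewrite (sum_eq (fun k => sqrt (a k) ^ 2) a) by (intros k _; apply pow2_sqrt, Ha).
    apply Rmult_le_compat; try apply sqrt_pos; apply sqrt_le_1_alt; assumption.
Qed.

Lemma sum_abs_le_of_Rpower_decay (b a : nat -> R) mu nu l n0 N :
  0 <= mu -> 1 / 2 < nu -> (1 <= n0)%nat -> (forall n, 0 <= a n) ->
  (forall n, (n0 <= n)%nat -> Rabs (b n) <= mu * Rpower (INR n) (- nu) * sqrt (a n)) ->
  sum_f_R0 (fun k => a (n0 + k)%nat) N <= l ->
  sum_f_R0 (fun k => Rabs (b (n0 + k)%nat)) N <= mu * sqrt (2 * nu / (2 * nu - 1)) * sqrt l.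
Proof.
  intros Hmu Hnu Hn0 Ha Hb Hl.
  apply (sum_abs_le_weighted _ (fun k => Rpower (INR (n0 + k)) (- nu)) (fun k => a (n0 + k)%nat));
    [exact Hmu | intro; apply Ha | intro; apply Hb; lia | | exact Hl].
  rewrite (sum_eq _ (fun k => Rpower (INR (n0 + k)) (- (2 * nu)))).
  - apply sum_Rpower_opp_le; [lra | exact Hn0].
  - intros k _. rewrite <- Rsqr_pow2. unfold Rsqr. rewrite <- Rpower_plus. f_equal. ring.
Qed.

Lemma Un_cv_const c : Un_cv (fun _ => c) c.
Proof.
  intros e He. exists 0%nat. intros. unfold R_dist. rewrite Rminus_diag, Rabs_R0. exact He.
Qed.

Lemma sum_f_R0_nonneg_bounded_cv (a : nat -> R) B :
  (forall k, 0 <= a k) -> (forall N, sum_f_R0 a N <= B) ->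
  {L | Un_cv (fun N => sum_f_R0 a N) L & L <= B}.
Proof.
  intros Ha HB. destruct (growing_cv (fun N => sum_f_R0 a N)) as [L HL].
  - intro N. simpl. pose proof (Ha (S N)). lra.
  - exists B. intros x [N ->]. apply HB.
  - exists L; [exact HL|].
    exact (Rle_cv_lim (fun N => HB N) HL (Un_cv_const B)).
Qed.

Lemma Un_cv_sum_scal (a : nat -> R) c L :
  Un_cv (fun N => sum_f_R0 a N) L -> Un_cv (fun N => sum_f_R0 (fun k => a k * c) N) (c * L).
Proof.
  intros Ha. apply Un_cv_ext with (fun N => c * sum_f_R0 a N); [intro; apply scal_sum|].
  apply CV_mult; [apply Un_cv_const | exact Ha].
Qed.

Section ExpSeries.

Variables (b r : nat -> R) (M Lb : R).
Hypothesis r_bound : forall k, Rabs (r k) <= M.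
Hypothesis abs_b_cv : Un_cv (fun N => sum_f_R0 (fun k => Rabs (b k)) N) Lb.

Definition exp_term k t := b k * exp (r k * t).

Lemma exp_term_bound k t rho : Rabs t <= rho -> Rabs (exp_term k t) <= Rabs (b k) * exp (M * rho).
Proof.
  intros Ht. unfold exp_term. rewrite Rabs_mult, (Rabs_pos_eq (exp _)) by (left; apply exp_pos).
  apply Rmult_le_compat_l; [apply Rabs_pos|]. apply exp_le.
  eapply Rle_trans; [apply Rle_abs|]. rewrite Rabs_mult.
  apply Rmult_le_compat; auto; apply Rabs_pos.
Qed.

Lemma exp_majorant_cv rho :
  Un_cv (fun N => sum_f_R0 (fun k => Rabs (b k) * exp (M * rho)) N) (exp (M * rho) * Lb).
Proof. apply Un_cv_sum_scal, abs_b_cv. Qed.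

Lemma exp_series_cv x : {L | Un_cv (fun N => SP exp_term N x) L}.
Proof.
  apply R_complete, cauchy_abs, cv_cauchy_1.
  apply (Rseries_CV_comp _ (fun k => Rabs (b k) * exp (M * Rabs x))).
  - intro k. split; [apply Rabs_pos | apply exp_term_bound, Rle_refl].
  - exists (exp (M * Rabs x) * Lb). apply exp_majorant_cv.
Qed.

Definition exp_series : R -> R := SFL exp_term exp_series_cv.

Lemma exp_series_infinite_sum t : infinite_sum (fun k => exp_term k t) (exp_series t).
Proof. unfold exp_series, SFL. destruct (exp_series_cv t) as [L HL]. exact HL. Qed.

Lemma exp_series_abs_le t rho : Rabs t <= rho -> Rabs (exp_series t) <= exp (M * rho) * Lb.
Proof.
  intros Ht. apply (sum_cv_maj _ exp_term t _ _ (exp_series_infinite_sum t) (exp_majorant_cv rho)).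
  intro k. apply exp_term_bound, Ht.
Qed.

Lemma exp_series_continuous t : continuity_pt exp_series t.
Proof.
  assert (Hrho : 0 < Rabs t + 1) by (pose proof (Rabs_pos t); lra).
  set (rho := mkposreal _ Hrho).
  assert (Hcvn : CVN_r exp_term rho).
  { exists (fun k => Rabs (b k) * exp (M * rho)), (exp (M * rho) * Lb). split.
    - eapply Un_cv_ext; [|apply exp_majorant_cv]. intro N. apply sum_eq. intros k _.
      symmetry; apply Rabs_pos_eq, Rmult_le_pos; [apply Rabs_pos | left; apply exp_pos].
    - intros k y Hy. apply exp_term_bound.
      unfold Boule in Hy. rewrite Rminus_0_r in Hy. left; exact Hy. }
  apply (CVU_continuity _ _ 0 rho (CVN_CVU exp_term exp_series_cv rho Hcvn)).
  - intros N y _. unfold SP. induction N as [|N IH]; simpl; unfold exp_term; [reg|].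
    apply (continuity_pt_plus (fun t => sum_f_R0 (fun k => exp_term k t) N)
                              (fun t => b (S N) * exp (r (S N) * t))); [exact IH | reg].
  - unfold Boule. simpl. rewrite Rminus_0_r. lra.
Qed.

End ExpSeries.

Lemma continuity_pt_Rabs_sqr f x : continuity_pt f x -> continuity_pt (fun t => Rabs (f t) ^ 2) x.
Proof.
  intros Hf. change (fun t => Rabs (f t) ^ 2) with (comp (fun u => u ^ 2) (comp Rabs f)).
  apply continuity_pt_comp; [apply continuity_pt_comp; [exact Hf | apply Rcontinuity_abs] | reg].
Qed.

Lemma kstar_bound T t : 0 < T -> 0 <= kstar T t <= 1.
Proof.
  intros HT. unfold kstar. destruct (Rle_dec (Rabs t) T) as [Ht|_]; [|lra].
  split; [|apply COS_bound].
  pose proof (Rle_abs t). pose proof (Rle_abs (- t)). rewrite Rabs_Ropp in *.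
  pose proof PI_RGT_0.
  replace (PI * t / (2 * T)) with (PI / 2 * (t / T)) by (field; lra).
  assert (-1 <= t / T <= 1).
  { split; [apply Rmult_le_reg_r with T | apply Rmult_le_reg_r with T];
      unfold Rdiv; rewrite ?Rmult_assoc, ?Rinv_l; lra. }
  apply cos_ge_0; nra.
Qed.

Lemma kstar_mult_integrable T h : 0 < T -> (forall t, continuity_pt h t) ->
  Riemann_integrable (fun t => kstar T t * h t) (- T) T.
Proof.
  intros HT Hh.
  apply (@Riemann_integrable_ext (fun t => cos (PI * t / (2 * T)) * h t)).
  - intros t Ht. rewrite Rmin_left, Rmax_right in Ht by lra.
    unfold kstar. destruct (Rle_dec (Rabs t) T) as [_|Hn]; [reflexivity|].
    exfalso. apply Hn, Rabs_le. lra.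
  - apply continuity_implies_RiemannInt; [lra|]. intros t _.
    apply continuity_pt_mult; [reg | apply Hh].
Qed.

Lemma RiemannInt_kstar_mult_le T h K (pr : Riemann_integrable (fun t => kstar T t * h t) (- T) T) :
  0 < T -> (forall t, Rabs t <= T -> 0 <= h t <= K) -> RiemannInt pr <= 2 * T * K.
Proof.
  intros HT Hh.
  assert (HK : 0 <= K) by (destruct (Hh 0); [rewrite Rabs_R0; lra | lra]).
  destruct (@RiemannInt_const_bound _ _ _ 0 K pr ltac:(lra)) as [_ Hle]; [|lra].
  intros t Ht. destruct (Hh t) as [H0 HK']; [apply Rabs_le; lra|].
  pose proof (kstar_bound T t HT). split; [nra|].
  apply Rle_trans with (1 * K); [apply Rmult_le_compat; lra | lra].
Qed.

Theorem proposition5p13 :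
  forall (T mu nu M : R),
    0 < T -> 0 < mu -> 1/2 < nu -> 0 <= M ->
    exists c : R, 0 < c /\
    forall (r Rs : nat -> R) (C D d : nat -> Cplx) (n' n0 : nat),
      (forall n, Rabs (r n) <= M) ->
      (exists L, infinite_sum
         (fun n => Cmod (C n) ^ 2 + Cmod (Cmul (d n) (D n)) ^ 2) L) ->
      (1 <= n')%nat ->
      (forall n, (n' <= n)%nat ->
         Rabs (Rs n) <= mu * Rpower (INR n) (- nu)
                         * sqrt (Cmod (C n) ^ 2 + Cmod (Cmul (d n) (D n)) ^ 2)) ->
      (n' <= n0)%nat ->
      forall l : R,
        infinite_sum
          (fun k => Cmod (C (n0 + k)%nat) ^ 2
                    + Cmod (Cmul (d (n0 + k)%nat) (D (n0 + k)%nat)) ^ 2) l ->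
        exists S : R -> R,
          (forall t, infinite_sum
                       (fun k => Rs (n0 + k)%nat * exp (r (n0 + k)%nat * t)) (S t)) /\
          exists pr : Riemann_integrable (fun t => kstar T t * Rabs (S t) ^ 2) (- T) T,
            RiemannInt pr <= c * l.
Proof.
  intros T mu nu M HT Hmu Hnu _.
  set (W := 2 * nu / (2 * nu - 1)).
  assert (HW : 0 < W) by (apply Rdiv_lt_0_compat; lra).
  exists (2 * T * (exp (M * T) * mu) ^ 2 * W). split.
  { pose proof (exp_pos (M * T)). apply Rmult_lt_0_compat; [|exact HW].
    apply Rmult_lt_0_compat; [lra | apply pow_lt; nra]. }
  intros r Rs C D d n' n0 Hr _ Hn' HRs Hn0 l Hl.
  set (a := fun n => Cmod (C n) ^ 2 + Cmod (Cmul (d n) (D n)) ^ 2).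
  assert (Ha : forall n, 0 <= a n)
    by (intro n; apply Rplus_le_le_0_compat; apply pow2_ge_0).
  assert (Hl_partial : forall N, sum_f_R0 (fun k => a (n0 + k)%nat) N <= l)
    by (intro N; apply sum_incr; [exact Hl | intro; apply Ha]).
  assert (Hl0 : 0 <= l).
  { eapply Rle_trans; [|apply (Hl_partial 0%nat)]. apply cond_pos_sum. intro; apply Ha. }
  set (B := mu * sqrt W * sqrt l).
  destruct (sum_f_R0_nonneg_bounded_cv _ B (fun k => Rabs_pos (Rs (n0 + k)%nat))
    (fun N => sum_abs_le_of_Rpower_decay Rs a mu nu l n0 N ltac:(lra) Hnu ltac:(lia) Ha
       (fun n Hn => HRs n ltac:(lia)) (Hl_partial N))) as [Lb HLb HLbB].
  set (S := exp_series _ (fun k => r (n0 + k)%nat) M Lb (fun k => Hr (n0 + k)%nat) HLb).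
  exists S. split; [exact (exp_series_infinite_sum _ _ _ _ _ _)|].
  exists (kstar_mult_integrable T _ HT
            (fun t => continuity_pt_Rabs_sqr _ _ (exp_series_continuous _ _ _ _ _ _ t))).
  eapply Rle_trans; [apply (RiemannInt_kstar_mult_le _ _ ((exp (M * T) * B) ^ 2) _ HT)|].
  - intros t Ht. split; [apply pow2_ge_0|]. apply pow_incr. split; [apply Rabs_pos|].
    eapply Rle_trans; [apply (exp_series_abs_le _ _ _ _ _ _ t T Ht)|].
    apply Rmult_le_compat_l; [left; apply exp_pos | exact HLbB].
  - right. unfold B. rewrite !Rpow_mult_distr, !pow2_sqrt by lra. ring.
Qed.
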